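(* For any positive integers $n$ and $p\ge2$, any (possibly randomized) one-way protocol for CHAIN$_p(n)$ (described in the context) with success probability at least $2/3$ must have communication complexity at least $n/(36p^2)$.
   Context: CHAIN$_p(n)$: there are $p$ players $P_1,\dots,P_p$. For each $i\in[p-1]$, player $P_i$ receives a bit string $x^i\in\{0,1\}^n$, and for each $i\in\{2,\dots,p\}$ player $P_i$ receives an index $t^i\in[n]$. It is promised that either $x^i_{t^{i+1}}=0$ for all $i\in[p-1]$ (the $0$-case) or $x^i_{t^{i+1}}=1$ for all $i\in[p-1]$ (the $1$-case); the goal is to decide which case holds. A one-way protocol consists of $p$ possibly randomized algorithms: player 1 computes a message $m_1$ from its input; for $i=2,\dots,p-1$ player $i$ computes $m_i$ from its input and $m_{i-1}$; player $p$ outputs a decision from its input and $m_{p-1}$. The communication complexity is the maximum length in bits of any $m_1,\dots,m_{p-1}$ over all inputs and randomness; the success probability is the probability (for every valid input) that the decision is correct. *)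

From HB Require Import structures.
From mathcomp Require Import all_boot all_order all_algebra.
From mathcomp Require Import reals.
Set Implicit Arguments. Unset Strict Implicit. Unset Printing Implicit Defensive.
Import Order.TTheory GRing.Theory Num.Theory.
Local Open Scope ring_scope.

Fixpoint bits (k : nat) : seq (seq bool) :=
  match k with
  | 0 => [:: [::]]
  | k.+1 => [seq b :: s | b <- [:: false; true], s <- bits k]
  end.

Definition strings (C : nat) : seq (seq bool) :=
  flatten [seq bits k | k <- iota 0 C.+1].

Definition is_msg_dist (R : realType) (C : nat) (d : seq bool -> R) : Prop :=
  (forall s, 0 <= d s) /\ (forall s, (C < size s)%N -> d s = 0) /\
  \sum_(s <- strings C) d s = 1.

(* A randomized one-way protocol for CHAIN_p(n) with private randomness is
   given by the output distribution of each player: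
   - first : x^1 |-> distribution of m_1
   - mid i : (x^i, t^i, m_{i-1}) |-> distribution of m_i      (2 <= i <= p-1)
   - last  : (t^p, m_{p-1}) |-> probability that player p outputs 1.  *)
Record protocol (R : realType) (n : nat) := Protocol {
  first : ('I_n -> bool) -> seq bool -> R;
  mid : nat -> ('I_n -> bool) -> 'I_n -> seq bool -> seq bool -> R;
  last : 'I_n -> seq bool -> R
}.

(* Communication complexity at most C: every message has length <= C
   with probability one (for all inputs and all incoming messages). *)
Definition valid_protocol (R : realType) (n p C : nat) (P : protocol R n) : Prop :=
  (forall x1, is_msg_dist C (first P x1)) /\
  (forall i xi ti m, (2 <= i <= p.-1)%N -> is_msg_dist C (mid P i xi ti m)) /\
  (forall tp m, 0 <= last P tp m <= 1).

(* Distribution of message m_{k+1}, given inputs x (x i = x^i) and t (t i = t^i). *)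
Fixpoint msg_dist (R : realType) (n C : nat) (P : protocol R n)
    (x : nat -> 'I_n -> bool) (t : nat -> 'I_n) (k : nat) : seq bool -> R :=
  match k with
  | 0 => first P (x 1%N)
  | k'.+1 => fun m =>
      \sum_(m' <- strings C)
        msg_dist C P x t k' m' * mid P k.+1 (x k.+1) (t k.+1) m' m
  end.

Definition prob_out1 (R : realType) (n p C : nat) (P : protocol R n)
    (x : nat -> 'I_n -> bool) (t : nat -> 'I_n) : R :=
  \sum_(m <- strings C) msg_dist C P x t (p - 2) m * last P (t p) m.

Definition chain_case (n p : nat) (x : nat -> 'I_n -> bool) (t : nat -> 'I_n)
    (b : bool) : Prop :=
  forall i, (1 <= i <= p.-1)%N -> x i (t i.+1) = b.

Definition success_prob (R : realType) (n p C : nat) (P : protocol R n)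
    (x : nat -> 'I_n -> bool) (t : nat -> 'I_n) (b : bool) : R :=
  if b then prob_out1 p C P x t else 1 - prob_out1 p C P x t.

(* Hybrid argument. For k = 0, ..., p - 1 let T_k sum the acceptance probability over all
   inputs with x^j_(t^(j+1)) = [j <= k] at every level j = 1, ..., p - 1, the pairs
   (x^j, t^(j+1)) being otherwise free; each level contributes a factor N = 2^n n to the
   total weight. The promise gives T_0 <= N^(p-1) / 3 and T_(p-1) >= 2 N^(p-1) / 3. But T_k
   and T_(k-1) differ only at level k, where the protocol becomes a one-way protocol for
   INDEX: the message m_k depends on the string x^k, and the rest of the run only on the
   index t^(k+1). An exponential-moment argument bounds the advantage of such a protocol
   with C-bit messages by N^(p-1) / q as soon as n >= 4 q^2 C; summing over the p - 1
   levels with q = 3 (p - 1) is a contradiction unless n <= 36 p^2 C. *)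

From Pilot Require Import Defs.
From mathcomp Require Import all_boot all_order all_algebra.
From mathcomp Require Import reals ring lra zify.
Set Implicit Arguments. Unset Strict Implicit. Unset Printing Implicit Defensive.
Import Order.TTheory GRing.Theory Num.Theory.
Local Open Scope ring_scope.

Section Chernoff.
Variable R : realFieldType.
Implicit Types (a h x : R).

Lemma bernoulli_ineq x m : -1 <= x -> 1 + m%:R * x <= (1 + x) ^+ m.
Proof.
move=> x_ge; elim: m => [|m IHm]; first by rewrite expr0 mul0r addr0.
have sqx_ge0 : 0 <= m%:R * (x * x) by rewrite mulr_ge0 ?ler0n // -expr2 sqr_ge0.
have x1_ge0 : 0 <= 1 + x by lra.
rewrite exprSr -natr1; apply: le_trans (ler_wpM2r x1_ge0 IHm); nra.
Qed.

Lemma exprz_ge_tangent a (k K : int) : 1 < a ->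
  a ^ K * (1 + (k - K)%:~R * (1 - a^-1)) <= a ^ k.
Proof.
move=> a_gt1; have a_gt0 : 0 < a by lra.
have -> : a ^ k = a ^ K * a ^ (k - K) by rewrite -expfzDr ?gt_eqF // addrC subrK.
rewrite ler_pM2l ?exprz_gt0 //.
have aVa : a * a^-1 = 1 by rewrite mulfV ?gt_eqF.
have aV_gt0 : 0 < a^-1 by rewrite invr_gt0.
case: (k - K) => m.
- have m_ge0 : (0 : R) <= m%:R by rewrite ler0n.
  have := @bernoulli_ineq (a - 1) m; rewrite addrCA subrr addr0 -pmulrn => /(_ ltac:(lra)).
  have : 1 - a^-1 <= a - 1 by nra.
  rewrite -[a ^ Posz m]/(a ^+ m); nra.
- rewrite NegzE -exprz_inv -[_ ^ Posz _]/(_ ^+ m.+1) rmorphN /=.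
  have := @bernoulli_ineq (a^-1 - 1) m.+1; rewrite addrCA subrr addr0 => /(_ ltac:(lra)).
  rewrite -[(m.+1)%:~R]/(m.+1%:R : R); lra.
Qed.

Lemma jensen_exprz (I : Type) (r : seq I) (w : I -> R) (c : I -> int) a (K : int) :
  1 < a -> (forall i, 0 <= w i) ->
  (\sum_(i <- r) w i) * K%:~R <= \sum_(i <- r) w i * (c i)%:~R ->
  (\sum_(i <- r) w i) * a ^ K <= \sum_(i <- r) w i * a ^ c i.
Proof.
move=> a_gt1 w_ge0 mean_ge.
have tangent_sum : \sum_(i <- r) w i * (a ^ K * (1 + ((c i) - K)%:~R * (1 - a^-1)))
    <= \sum_(i <- r) w i * a ^ c i.
  by apply: ler_sum => i _; rewrite ler_wpM2l ?exprz_ge_tangent.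
apply: le_trans tangent_sum; rewrite -subr_ge0.
have -> : \sum_(i <- r) w i * (a ^ K * (1 + ((c i) - K)%:~R * (1 - a^-1)))
    - (\sum_(i <- r) w i) * a ^ K
    = a ^ K * (1 - a^-1) * (\sum_(i <- r) w i * (c i)%:~R - (\sum_(i <- r) w i) * K%:~R).
  rewrite !mulr_suml -!sumrB mulr_sumr; apply: eq_bigr => i _.
  rewrite rmorphB /=; ring.
rewrite mulr_ge0 ?subr_ge0 // mulr_ge0 ?exprz_ge0 ?subr_ge0 ?invf_le1 //; lra.
Qed.
Lemma sech_pow_bounds h (q : nat) : 0 < h <= 3^-1 -> q%:R * h = 1 ->
  let b := 2 / ((1 + h) + (1 + h)^-1) in
  [/\ 0 < b <= 1, 5 / 6 <= b ^+ q & 1 + h / 2 <= (1 + h) * b ^+ q].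
Proof.
move=> /andP[h_gt0 h_le] qh b.
have D_gt0 : 0 < (1 + h) ^+ 2 + 1 by rewrite addr_gt0 ?exprn_gt0 //; lra.
set w := h / ((1 + h) ^+ 2 + 1).
have w_ge0 : 0 <= w by rewrite divr_ge0 ?ltW.
have w_mulD : w * ((1 + h) ^+ 2 + 1) = h by rewrite mulfVK ?gt_eqF.
have bB : b - 1 = - (h * h) / ((1 + h) ^+ 2 + 1).
  by rewrite /b; field; rewrite ?gt_eqF //; lra.
have bE : q%:R * (b - 1) = - w by rewrite bB mulNr mulrN !mulrA qh mul1r.
have b_gt0 : 0 < b by rewrite divr_gt0 // addr_gt0 ?invr_gt0; lra.
have b_le1 : b <= 1 by rewrite -subr_le0 bB mulNr oppr_le0 divr_ge0 ?mulr_ge0 ?ltW.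
have bq_ge : 1 - w <= b ^+ q.
  by have := @bernoulli_ineq (b - 1) q; rewrite bE addrCA subrr addr0; apply; lra.
have D_ge : 2 * (1 + h) <= (1 + h) ^+ 2 + 1 by rewrite expr2; nra.
have w_le_h : w * (2 * (1 + h)) <= h by rewrite -[X in _ <= X]w_mulD ler_wpM2l.
split; [by rewrite b_gt0 | nra |].
by apply: le_trans (ler_wpM2l _ bq_ge); nra.
Qed.

Lemma exp2_le_three_halves (C : nat) : (0 < C)%N -> 2 ^+ C.+1 <= (3 / 2) ^+ (4 * C) * (5 / 6) :> R.
Proof.
move=> C_gt0; rewrite exprM exprS (_ : (3 / 2) ^+ 4 = 81 / 32 * 2 :> R).
  have : 81 / 32 <= (81 / 32) ^+ C :> R by rewrite -[leLHS]expr1 ler_weXn2l //; lra.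
  have : 0 < 2 ^+ C :> R by rewrite exprn_gt0.
  rewrite [(_ * 2) ^+ C]exprMn; nra.
by rewrite !exprS expr0; field.
Qed.

Lemma chernoff_numeric (n q C : nat) (a : R) : (3 <= q)%N -> (0 < C)%N ->
  (4 * q ^ 2 * C <= n)%N -> a = 1 + q%:R^-1 ->
  2 ^+ C.+1 * (a + a^-1) ^+ n <= 2 ^+ n * a ^+ (n %/ q).
Proof.
move=> q_ge3 C_gt0 n_ge a_def; subst a; set h : R := q%:R^-1; set K := (n %/ q)%N.
have q_ge3R : 3 <= q%:R :> R by rewrite (ler_nat R 3 q).
have h_gt0 : 0 < h by rewrite invr_gt0; lra.
have h_le : h <= 3^-1 by rewrite lef_pV2 ?posrE //; lra.
have qh : q%:R * h = 1 by rewrite mulfV // gt_eqF //; lra.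
have [/andP[b_gt0 b_le1] bq_ge abq_ge] := sech_pow_bounds (ltac:(lra) : 0 < h <= 3^-1) qh.
set a := 1 + h in abq_ge *; set b := 2 / (a + a^-1) in b_gt0 b_le1 bq_ge abq_ge *.
have s_gt0 : 0 < a + a^-1 by rewrite addr_gt0 ?invr_gt0 /a; lra.
have -> : (2 : R) ^+ n = (a + a^-1) ^+ n * b ^+ n by rewrite -exprMn mulrC divfK ?gt_eqF.
rewrite mulrC -mulrA ler_pM2l ?exprn_gt0 // mulrC.
have K_ge : (q * (4 * C) <= K)%N.
  by rewrite leq_divRL ?(leq_trans _ q_ge3) //; apply: leq_trans n_ge; nia.
have bn_ge : (a * b ^+ q) ^+ K * b ^+ q <= a ^+ K * b ^+ n.
  rewrite [in b ^+ n](divn_eq n q) exprD -/K exprMn -exprM mulnC -mulrA.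
  rewrite ler_pM2l ?exprn_gt0 ?ler_pM2l ?exprn_gt0 //; last by rewrite /a; lra.
  by apply: ler_wiXn2l; [exact: ltW | | rewrite ltnW // ltn_mod (leq_trans _ q_ge3)].
have hq_ge : 3 / 2 <= (1 + h / 2) ^+ q.
  by have := @bernoulli_ineq (h / 2) q; rewrite mulrA qh => /(_ ltac:(lra)); lra.
have pow_ge : (3 / 2) ^+ (4 * C) <= (a * b ^+ q) ^+ K.
  apply: (le_trans (y := (1 + h / 2) ^+ (q * (4 * C)))).
    by rewrite [leRHS]exprM lerXn2r ?nnegrE //; lra.
  apply: (le_trans (y := (1 + h / 2) ^+ K)); first by rewrite ler_weXn2l //; lra.
  by rewrite lerXn2r ?nnegrE //; lra.
apply: le_trans (exp2_le_three_halves C_gt0) _; apply: le_trans bn_ge.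
by apply: ler_pM pow_ge bq_ge; rewrite ?exprn_ge0 //; lra.
Qed.

End Chernoff.

Definition sgnb (b : bool) : int := if b then 1 else -1.

Definition bit_corr (I : finType) (u v : I -> bool) : int := \sum_i sgnb (u i) * sgnb (v i).

Lemma size_strings C : (size (strings C)).+1 = (2 ^ C.+1)%N.
Proof.
have size_bits k : size (bits k) = (2 ^ k)%N.
  by elim: k => [//|k IHk]; rewrite /= !size_cat !size_map IHk expnS /=; lia.
elim: C => [//|C IHC].
have iotaS : iota 0 C.+2 = iota 0 C.+1 ++ [:: C.+1] by rewrite -addn1 iotaD.
rewrite /strings iotaS map_cat flatten_cat size_cat -/(strings C) -addSn IHC /= cats0.
by rewrite !size_cat !size_map size_bits /= !expnS; lia.
Qed.

Definition ffun_upd (I : finType) (T : Type) (u : {ffun I -> T}) (s : I) (x : T) :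
  {ffun I -> T} := [ffun i => if i == s then x else u i].

Lemma sum_ffun_upd (V : nmodType) (I : finType) (s : I) (b : bool)
    (g : {ffun I -> bool} -> V) :
  \sum_u g (ffun_upd u s b) = (\sum_(u : {ffun I -> bool} | u s == b) g u) *+ 2.
Proof.
rewrite (bigID (fun u : {ffun I -> bool} => u s == b)) /= mulr2n.
have updK (u : {ffun I -> bool}) : u s = b -> ffun_upd u s b = u.
  by move=> usb; apply/ffunP => i; rewrite ffunE; case: eqP => // ->.
congr (_ + _); first by apply: eq_bigr => u /eqP /updK ->.
pose flip (u : {ffun I -> bool}) := ffun_upd u s (~~ u s).
have flipK : involutive flip.
  by move=> u; apply/ffunP => i; rewrite !ffunE; case: eqP => // ->; rewrite eqxx negbK.
rewrite (reindex_inj (inv_inj flipK)) /=; apply: eq_big => u.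
  by rewrite /flip ffunE eqxx; case: (u s); case: (b).
move=> usb; congr g; apply/ffunP => i; rewrite !ffunE; case: eqP => // ->.
by move: usb; rewrite /flip ffunE eqxx; case: (u s); case: (b).
Qed.

Section BitVectors.
Variables (R : realFieldType) (I : finType).

Lemma sum_sgnb (s : I) : \sum_(u : {ffun I -> bool}) (sgnb (u s))%:~R = 0 :> R.
Proof.
rewrite (eq_bigr (fun u : {ffun I -> bool} =>
    \prod_i (if i == s then (sgnb (u i))%:~R else 1))); last first.
  by move=> u _; rewrite -big_mkcond big_pred1_eq.
rewrite -(bigA_distr_bigA (fun i (b : bool) => if i == s then (sgnb b)%:~R else 1 : R)) /=.
by rewrite (bigD1 s) //= big_bool eqxx /= addrN mul0r.
Qed.

Lemma sum_exprz_bit_corr (a : R) (v : I -> bool) : a != 0 ->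
  \sum_(u : {ffun I -> bool}) a ^ bit_corr u v = (a + a^-1) ^+ #|I|.
Proof.
move=> a_neq0.
have exprz_sum (u : {ffun I -> bool}) : a ^ bit_corr u v = \prod_i a ^ (sgnb (u i) * sgnb (v i)).
  by rewrite (big_morph (fun k : int => a ^ k) (fun k l => expfzDr k l a_neq0) (expr0z a)).
rewrite (eq_bigr _ (fun u _ => exprz_sum u)).
rewrite -(bigA_distr_bigA (fun i (b : bool) => a ^ (sgnb b * sgnb (v i)))) /=.
rewrite -prodr_const; apply: eq_bigr => i _.
by rewrite big_bool /=; case: (v i); rewrite /= ?expr1z ?exprN1 // addrC.
Qed.

Lemma sum_ffun_upd_sub (s : I) (g : {ffun I -> bool} -> R) :
  \sum_u (g (ffun_upd u s true) - g (ffun_upd u s false))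
    = (\sum_(u : {ffun I -> bool}) (sgnb (u s))%:~R * g u) *+ 2.
Proof.
rewrite sumrB !sum_ffun_upd -mulrnBl [in RHS](bigID (fun u : {ffun I -> bool} => u s)) /=.
rewrite -sumrN; congr (_ *+ 2); congr (_ + _); apply: eq_big => [u|u].
- by case: (u s).
- by rewrite eqb_id => ->; rewrite mul1r.
- by case: (u s).
- by move=> /eqP ->; rewrite mulN1r.
Qed.

Lemma sum_bit_corr (v : I -> bool) :
  \sum_(u : {ffun I -> bool}) (bit_corr u v)%:~R = 0 :> R.
Proof.
under eq_bigr do rewrite rmorph_sum.
rewrite exchange_big big1 // => i _.
under eq_bigr do rewrite rmorphM.
by rewrite -mulr_suml sum_sgnb mul0r.
Qed.

Section ExponentialMoment.
Variables (M : eqType) (r : seq M) (al : {ffun I -> bool} -> M -> R) (e : M -> I -> bool).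
Hypotheses (al_ge0 : forall u m, 0 <= al u m) (al_sum1 : forall u, \sum_(m <- r) al u m = 1).

Lemma bit_corr_moment_le a : 0 < a ->
  \sum_u \sum_(m <- r) al u m * a ^ bit_corr u (e m) <= (size r)%:R * (a + a^-1) ^+ #|I|.
Proof.
move=> a_gt0; have al_le1 u m : m \in r -> al u m <= 1.
  by move=> m_in; rewrite -(al_sum1 u) (big_rem m) //= lerDl sumr_ge0.
apply: (le_trans (y := \sum_(u : {ffun I -> bool}) \sum_(m <- r) a ^ bit_corr u (e m))).
  apply: ler_sum => u _; rewrite !big_seq; apply: ler_sum => m m_in.
  by rewrite ler_piMl ?exprz_ge0 ?al_le1 ?ltW.
rewrite exchange_big /= (eq_bigr _ (fun m _ => sum_exprz_bit_corr (e m) (lt0r_neq0 a_gt0))).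
by rewrite big_const_seq count_predT iter_addr_0 mulr_natl.
Qed.

Lemma bit_corr_moment_ge a (K : nat) : 1 < a ->
  2 ^+ #|I| * K%:R <= \sum_u \sum_(m <- r) al u m * (bit_corr u (e m))%:~R ->
  2 ^+ #|I| * a ^+ K <= \sum_u \sum_(m <- r) al u m * a ^ bit_corr u (e m).
Proof.
move=> a_gt1 mean_ge.
pose pairs := [seq (u, m) | u <- index_enum {ffun I -> bool}, m <- r].
have sum_pairs (F : {ffun I -> bool} -> M -> R) :
    \sum_(p <- pairs) F p.1 p.2 = \sum_u \sum_(m <- r) F u m by exact: big_allpairs.
have weight_sum : \sum_(p <- pairs) al p.1 p.2 = 2 ^+ #|I|.
  rewrite (sum_pairs al) (eq_bigr _ (fun u _ => al_sum1 u)) sumr_const card_ffun card_bool.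
  by rewrite -natrX.
have := @jensen_exprz _ _ pairs (fun p => al p.1 p.2) (fun p => bit_corr p.1 (e p.2)) a K a_gt1.
rewrite weight_sum (sum_pairs (fun u m => al u m * (bit_corr u (e m))%:~R)).
by rewrite (sum_pairs (fun u m => al u m * a ^ bit_corr u (e m))); apply => // p; apply: al_ge0.
Qed.
End ExponentialMoment.

(* The exponential-moment (Chernoff) method: a message of at most C bits is one of fewer than
   2^(C+1) strings, while each fixed guess has correlation with a uniform u concentrated near 0. *)
Lemma bit_corr_message_lt (C q : nat) (al : {ffun I -> bool} -> seq bool -> R)
    (e : seq bool -> I -> bool) :
  (0 < #|I|)%N -> (3 <= q)%N -> (4 * q ^ 2 * C <= #|I|)%N ->
  (forall u m, 0 <= al u m) -> (forall u, \sum_(m <- strings C) al u m = 1) ->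
  q%:R * \sum_u \sum_(m <- strings C) al u m * (bit_corr u (e m))%:~R
    < (2 ^ #|I| * #|I|)%:R.
Proof.
move=> I_gt0 q_ge3; case: C => [_ _ al_sum1 | C I_ge al_ge0 al_sum1].
  have al1 u : al u [::] = 1 by rewrite -(al_sum1 u) /strings /= big_seq1.
  under eq_bigr do rewrite /strings /= big_seq1 al1 mul1r.
  by rewrite sum_bit_corr mulr0 ltr0n muln_gt0 expn_gt0.
rewrite ltNge; apply/negP => corr_ge.
set n := #|I| in I_ge corr_ge *; set K := (n %/ q)%N; set a : R := 1 + q%:R^-1.
have q_gt0 : 0 < q%:R :> R by rewrite ltr0n (leq_trans _ q_ge3).
have a_gt1 : 1 < a by rewrite /a ltrDl invr_gt0.
have mean_ge : 2 ^+ n * K%:R <= \sum_u \sum_(m <- strings C.+1) al u m * (bit_corr u (e m))%:~R.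
  rewrite -(ler_pM2l q_gt0); apply: le_trans corr_ge.
  by rewrite mulrCA -natrX -!natrM ler_nat leq_mul2l mulnC leq_divM orbT.
have lower := bit_corr_moment_ge al_ge0 al_sum1 a_gt1 mean_ge.
have upper := bit_corr_moment_le e al_ge0 al_sum1 (lt_trans ltr01 a_gt1).
have := chernoff_numeric q_ge3 (ltn0Sn C) I_ge (erefl a).
have size_lt : (size (strings C.+1) < 2 ^ C.+2)%N by rewrite -size_strings.
have : (size (strings C.+1))%:R * (a + a^-1) ^+ n < 2 ^+ C.+2 * (a + a^-1) ^+ n.
  by rewrite ltr_pM2r ?exprn_gt0 -?natrX ?ltr_nat // addr_gt0 ?invr_gt0; lra.
lra.
Qed.

Lemma index_advantage_lt (C q : nat) (al : {ffun I -> bool} -> seq bool -> R)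
    (be : I -> seq bool -> R) :
  (0 < #|I|)%N -> (3 <= q)%N -> (4 * q ^ 2 * C <= #|I|)%N ->
  (forall u m, 0 <= al u m) -> (forall u, \sum_(m <- strings C) al u m = 1) ->
  (forall s m, 0 <= be s m <= 1) ->
  q%:R * \sum_u \sum_s \sum_(m <- strings C)
      (al (ffun_upd u s true) m - al (ffun_upd u s false) m) * be s m
    < (2 ^ #|I| * #|I|)%:R.
Proof.
move=> I_gt0 q_ge3 I_ge al_ge0 al_sum1 be01.
pose S m s := \sum_(u : {ffun I -> bool}) (sgnb (u s))%:~R * al u m.
(* Rounding the output to the sign of S can only help: (2 be - 1) S <= |S|. *)
pose e m s := 0 <= S m s.
apply: le_lt_trans (bit_corr_message_lt e I_gt0 q_ge3 I_ge al_ge0 al_sum1).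
rewrite ler_wpM2l ?ler0n //.
have adv_eq : \sum_u \sum_s \sum_(m <- strings C)
      (al (ffun_upd u s true) m - al (ffun_upd u s false) m) * be s m
    = \sum_s \sum_(m <- strings C) S m s * (be s m *+ 2 - 1).
  rewrite exchange_big; apply: eq_bigr => s _.
  have S_sum0 : \sum_(m <- strings C) S m s = 0.
    rewrite exchange_big -[RHS](sum_sgnb s); apply: eq_bigr => u _.
    by rewrite -mulr_sumr al_sum1 mulr1.
  under eq_bigr do under eq_bigr do rewrite mulrBl.
  under eq_bigr do rewrite sumrB.
  rewrite (sum_ffun_upd_sub s (fun u => \sum_(m <- strings C) al u m * be s m)).
  under [RHS]eq_bigr do rewrite mulrBr mulr1.
  rewrite sumrB S_sum0 subr0.
  under [RHS]eq_bigr do rewrite mulrnAr.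
  rewrite sumrMnl; congr (_ *+ 2).
  under [RHS]eq_bigr do rewrite mulr_suml.
  rewrite [RHS]exchange_big; apply: eq_bigr => u _.
  by rewrite mulr_sumr; apply: eq_bigr => m _; rewrite mulrA.
have corr_eq : \sum_u \sum_(m <- strings C) al u m * (bit_corr u (e m))%:~R
    = \sum_s \sum_(m <- strings C) S m s * (sgnb (e m s))%:~R.
  rewrite exchange_big [RHS]exchange_big; apply: eq_bigr => m _.
  under eq_bigr do rewrite rmorph_sum mulr_sumr.
  rewrite exchange_big; apply: eq_bigr => s _.
  by rewrite mulr_suml; apply: eq_bigr => u _; rewrite rmorphM /=; ring.
rewrite adv_eq corr_eq; apply: ler_sum => s _; apply: ler_sum => m _.
have /andP[be_ge0 be_le1] := be01 s m.
by rewrite /e /sgnb mulr2n; case: (lerP 0 (S m s)) => S_sign; rewrite ?rmorph1 ?rmorphN1; nra.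
Qed.
End BitVectors.

Definition upd (T : Type) (f : nat -> T) (j : nat) (v : T) : nat -> T :=
  fun i => if i == j then v else f i.

Lemma upd_eqfun (T : Type) (f f' : nat -> T) j v : f =1 f' -> upd f j v =1 upd f' j v.
Proof. by move=> eq_f i; rewrite /upd eq_f. Qed.

Lemma updC (T : Type) (f : nat -> T) j k v w :
  j != k -> upd (upd f j v) k w =1 upd (upd f k w) j v.
Proof.
by move=> neq_jk i; rewrite /upd; case: (eqVneq i j) => [->|//]; rewrite (negbTE neq_jk).
Qed.

Section Hybrid.
Variables (R : numDomainType) (n : nat).
Local Notation input_fun := ((nat -> 'I_n -> bool) -> (nat -> 'I_n) -> R).
Local Notation N := ((2 ^ n * n)%:R : R).
Implicit Types (f g : input_fun) (c : nat -> bool) (js : seq nat).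

(* Level sums overwrite coordinates with [upd], so commuting two of them only produces
   pointwise equal inputs; all summands are therefore required to be extensional. *)
Definition ext_input f := forall x x' t t', x =1 x' -> t =1 t' -> f x t = f x' t'.

Definition level_sum (j : nat) (b : bool) f : input_fun := fun x t =>
  \sum_(u : {ffun 'I_n -> bool}) \sum_(s < n) f (upd x j (ffun_upd u s b)) (upd t j.+1 s).

(* [hybrid_sum c js f x t] sums [f] over the inputs obtained from [(x, t)] by choosing, for
   each level j in js, x^j and t^(j+1) with x^j_(t^(j+1)) = c j. Each such choice is counted
   twice, as [u] ranges over both values of the overwritten bit. *)
Definition hybrid_sum c js f : input_fun := foldr (fun j => level_sum j (c j)) f js.

Definition forced c js (x : nat -> 'I_n -> bool) (t : nat -> 'I_n) :=
  forall j, j \in js -> x j (t j.+1) = c j.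

Lemma eq_level_sum j b f g : (forall x t, f x t = g x t) ->
  forall x t, level_sum j b f x t = level_sum j b g x t.
Proof. by move=> eq_fg x t; apply: eq_bigr => u _; apply: eq_bigr => s _. Qed.

Lemma level_sum_ext j b f : ext_input f -> ext_input (level_sum j b f).
Proof.
move=> f_ext x x' t t' eq_x eq_t; apply: eq_bigr => u _; apply: eq_bigr => s _.
by apply: f_ext; apply: upd_eqfun.
Qed.

Lemma hybrid_sum_ext c js f : ext_input f -> ext_input (hybrid_sum c js f).
Proof. by move=> f_ext; elim: js => //= j js; apply: level_sum_ext. Qed.

Lemma eq_hybrid_sum c c' js f : {in js, c =1 c'} ->
  forall x t, hybrid_sum c js f x t = hybrid_sum c' js f x t.
Proof.
elim: js => //= j js IHjs eq_c x t; rewrite eq_c ?mem_head //.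
by apply: eq_level_sum => x' t'; apply: IHjs => i i_in; apply: eq_c; rewrite inE i_in orbT.
Qed.

Lemma level_sumC j k b b' f x t : ext_input f -> j != k ->
  level_sum j b (level_sum k b' f) x t = level_sum k b' (level_sum j b f) x t.
Proof.
move=> f_ext neq_jk; rewrite /level_sum.
under eq_bigr do rewrite exchange_big.
under [RHS]eq_bigr do rewrite exchange_big.
rewrite exchange_big; apply: eq_bigr => u' _; apply: eq_bigr => u _.
rewrite exchange_big; apply: eq_bigr => s' _; apply: eq_bigr => s _.
by apply: f_ext; apply: updC; rewrite // eqSS.
Qed.

Lemma level_sum_hybrid_sumC c js k b f x t : ext_input f -> k \notin js ->
  level_sum k b (hybrid_sum c js f) x t = hybrid_sum c js (level_sum k b f) x t.
Proof.
move=> f_ext; elim: js x t => //= j js IHjs x t.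
rewrite inE negb_or => /andP[neq_kj k_notin].
rewrite level_sumC //; last exact: hybrid_sum_ext.
by apply: eq_level_sum => x' t'; apply: IHjs.
Qed.

Lemma level_sum_const j b a x t : level_sum j b (fun _ _ => a) x t = a * N.
Proof.
rewrite /level_sum (eq_bigr (fun=> a *+ n)) => [|u _]; last by rewrite sumr_const card_ord.
by rewrite sumr_const card_ffun card_bool card_ord -mulrnA mulr_natr mulnC.
Qed.

Lemma hybrid_sum_const c js a x t : hybrid_sum c js (fun _ _ => a) x t = a * N ^+ size js.
Proof.
elim: js x t => [|j js IHjs] x t /=; first by rewrite mulr1.
by rewrite (eq_level_sum _ _ IHjs) level_sum_const exprSr mulrA.
Qed.

Lemma level_sum_sub_lt j b f g e x t : (0 < n)%N ->
  (forall x t, f x t - g x t < e) -> level_sum j b f x t - level_sum j b g x t < e * N.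
Proof.
move=> n_gt0 fg_lt; rewrite -(level_sum_const j b e x t) /level_sum -sumrB.
apply: ltr_sum => [|u _]; first by apply/hasP; exists [ffun=> false]; rewrite ?mem_index_enum.
rewrite -sumrB; apply: ltr_sum => [|s _]; last exact: fg_lt.
by apply/hasP; exists (Ordinal n_gt0); rewrite ?mem_index_enum.
Qed.

Lemma hybrid_sum_sub_lt c js f g e x t : (0 < n)%N ->
  (forall x t, f x t - g x t < e) ->
  hybrid_sum c js f x t - hybrid_sum c js g x t < e * N ^+ size js.
Proof.
move=> n_gt0 fg_lt; elim: js x t => [|j js IHjs] x t /=; first by rewrite mulr1 fg_lt.
by rewrite exprSr mulrA level_sum_sub_lt.
Qed.

Lemma hybrid_sum_step c c' js k f e x t : (0 < n)%N -> ext_input f -> uniq js ->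
  k \in js -> c k -> ~~ c' k -> (forall j, j != k -> c j = c' j) ->
  (forall x t, level_sum k true f x t - level_sum k false f x t < e) ->
  hybrid_sum c js f x t - hybrid_sum c' js f x t < e * N ^+ (size js).-1.
Proof.
move=> n_gt0 f_ext + + c_k c'_k eq_c gap; elim: js x t => //= j js IHjs x t.
move=> /andP[j_notin uniq_js]; rewrite inE; case: (eqVneq j k) => [eq_jk _ | neq_jk /= k_in].
  subst j.
  have eq_cc' : {in js, c =1 c'}.
    by move=> i i_in; apply: eq_c; apply: contraNneq j_notin => <-.
  rewrite (negbTE c'_k) c_k -(eq_level_sum _ _ (eq_hybrid_sum f eq_cc')).
  by rewrite !level_sum_hybrid_sumC // hybrid_sum_sub_lt.
have size_gt0 : (0 < size js)%N by case: (js) k_in.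
rewrite -eq_c // -[in size js](prednK size_gt0) exprSr mulrA.
by apply: level_sum_sub_lt => // x' t'; apply: IHjs.
Qed.

Lemma ler_hybrid_sum_forced c js f g x t : uniq js ->
  (forall x t, forced c js x t -> f x t <= g x t) ->
  hybrid_sum c js f x t <= hybrid_sum c js g x t.
Proof.
have gen : forall ds, uniq (ds ++ js) -> (forall y u, forced c (ds ++ js) y u -> f y u <= g y u) ->
    forall y u, forced c ds y u -> hybrid_sum c js f y u <= hybrid_sum c js g y u.
  elim: js => [|j js IHjs] ds uniq_djs fg_le y u forced_ds /=.
    by apply: fg_le; rewrite cats0.
  rewrite -cat_rcons in uniq_djs fg_le.
  apply: ler_sum => z _; apply: ler_sum => s _; apply: (IHjs (rcons ds j)) => // i.
  rewrite mem_rcons inE => /orP[/eqP-> | i_in]; first by rewrite /upd !eqxx ffunE eqxx.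
  have neq_ij : i != j.
    by apply: contraTneq uniq_djs => <-; rewrite cat_uniq rcons_uniq i_in.
  by rewrite /upd (negbTE neq_ij) eqSS (negbTE neq_ij) forced_ds.
by move=> uniq_js fg_le; apply: (gen [::]).
Qed.
End Hybrid.

Lemma sum_weighted_in01 (R : numDomainType) (T : Type) (r : seq T) (w f : T -> R) :
  (forall i, 0 <= w i) -> \sum_(i <- r) w i = 1 -> (forall i, 0 <= f i <= 1) ->
  0 <= \sum_(i <- r) w i * f i <= 1.
Proof.
move=> w_ge0 w_sum1 f01; apply/andP; split.
  by apply: sumr_ge0 => i _; rewrite mulr_ge0 // (andP (f01 i)).1.
rewrite -[leRHS]w_sum1; apply: ler_sum => i _.
by rewrite ler_piMr // (andP (f01 i)).2.
Qed.

Section Protocol.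
Variables (R : realType) (n p C : nat) (P : protocol R n).
Hypothesis P_valid : valid_protocol p C P.
Local Notation N := ((2 ^ n * n)%:R : R).

(* [accept_prob x t d m] is the probability that player p outputs 1 when player p - d
   receives the message m. *)
Fixpoint accept_prob (x : nat -> 'I_n -> bool) (t : nat -> 'I_n) (d : nat) (m : seq bool) : R :=
  match d with
  | 0 => Defs.last P (t p) m
  | d.+1 => \sum_(m' <- strings C)
      mid P (p.-1 - d)%N (x (p.-1 - d)%N) (t (p.-1 - d)%N) m m' * accept_prob x t d m'
  end.

Lemma msg_dist_is_dist x t i : (i <= p - 2)%N ->
  (forall m, 0 <= msg_dist C P x t i m) /\ \sum_(m <- strings C) msg_dist C P x t i m = 1.
Proof.
have [first_dist [mid_dist _]] := P_valid.
elim: i => [_ | i IHi i_le] /=; first by have [? [_ ?]] := first_dist (x 1%N).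
have [dist_ge0 dist_sum1] := IHi (ltnW i_le).
have mid_dist_i m' : is_msg_dist C (mid P i.+2 (x i.+2) (t i.+2) m').
  by apply: mid_dist; lia.
split=> [m|].
  by apply: sumr_ge0 => m' _; rewrite mulr_ge0 // (mid_dist_i m').1.
rewrite exchange_big /= -[RHS]dist_sum1; apply: eq_bigr => m' _.
by rewrite -mulr_sumr (mid_dist_i m').2.2 mulr1.
Qed.

Lemma accept_prob_in01 x t d m : (d <= p - 2)%N -> 0 <= accept_prob x t d m <= 1.
Proof.
have [_ [mid_dist last01]] := P_valid.
elim: d m => [m _ | d IHd m d_le] /=; first exact: last01.
have [mid_ge0 [_ mid_sum1]] :
    is_msg_dist C (mid P (p.-1 - d)%N (x (p.-1 - d)%N) (t (p.-1 - d)%N) m).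
  by apply: mid_dist; lia.
by apply: sum_weighted_in01 => // m'; apply: IHd; lia.
Qed.

Lemma prob_out1_split x t d : (d <= p - 2)%N ->
  prob_out1 p C P x t
    = \sum_(m <- strings C) msg_dist C P x t (p - 2 - d) m * accept_prob x t d m.
Proof.
elim: d => [_ | d IHd d_le]; first by rewrite subn0.
rewrite IHd ?(ltnW d_le) // (_ : (p - 2 - d = (p - 2 - d.+1).+1)%N); last by lia.
rewrite /=; under eq_bigr do rewrite mulr_suml.
rewrite exchange_big /=; apply: eq_bigr => m' _.
rewrite mulr_sumr; apply: eq_bigr => m _.
by rewrite (_ : ((p - 2 - d.+1).+2 = p.-1 - d)%N) ?mulrA //; lia.
Qed.

Lemma msg_dist_ext x x' t t' i m :
  (forall j, (j <= i.+1)%N -> x j = x' j) -> (forall j, (j <= i.+1)%N -> t j = t' j) ->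
  msg_dist C P x t i m = msg_dist C P x' t' i m.
Proof.
elim: i m => [|i IHi] m x_eq t_eq /=; first by rewrite x_eq.
apply: eq_bigr => m' _; rewrite x_eq // t_eq // (IHi m') // => j j_le.
  by apply: x_eq; lia.
by apply: t_eq; lia.
Qed.

Lemma accept_prob_ext x x' t t' d m : (d < p)%N ->
  (forall j, (p.-1 - d < j)%N -> x j = x' j) -> (forall j, (p.-1 - d < j)%N -> t j = t' j) ->
  accept_prob x t d m = accept_prob x' t' d m.
Proof.
elim: d m => [|d IHd] m d_lt x_eq t_eq /=; first by rewrite t_eq //; lia.
apply: eq_bigr => m' _; rewrite x_eq ?t_eq; try lia.
by rewrite (IHd m') //; [lia | move=> j j_gt; apply: x_eq | move=> j j_gt; apply: t_eq]; lia.
Qed.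

Lemma prob_out1_ext : ext_input (prob_out1 p C P).
Proof.
move=> x x' t t' eq_x eq_t; apply: eq_bigr => m _.
by rewrite eq_t; congr (_ * _); apply: msg_dist_ext => j _; [exact: eq_x | exact: eq_t].
Qed.

(* With every level but k fixed, the chain is an instance of INDEX: the message m_k depends
   on the bit vector x^k, and the rest of the run on the index t^(k+1). *)
Lemma chain_level_gap q k x t : (0 < n)%N -> (3 <= q)%N -> (4 * q ^ 2 * C <= n)%N ->
  (1 <= k <= p.-1)%N ->
  level_sum k true (prob_out1 p C P) x t - level_sum k false (prob_out1 p C P) x t
    < N / q%:R.
Proof.
move=> n_gt0 q_ge3 n_ge /andP[k_ge1 k_le]; set d := (p.-1 - k)%N.
pose al (v : {ffun 'I_n -> bool}) m := msg_dist C P (upd x k v) t k.-1 m.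
pose be (s : 'I_n) m := accept_prob x (upd t k.+1 s) d m.
have prob_split b u s : prob_out1 p C P (upd x k (ffun_upd u s b)) (upd t k.+1 s)
    = \sum_(m <- strings C) al (ffun_upd u s b) m * be s m.
  rewrite (prob_out1_split _ _ (d := d)); last by rewrite /d; lia.
  have -> : (p - 2 - d = k.-1)%N by rewrite /d; lia.
  apply: eq_bigr => m _; congr (_ * _).
    apply: msg_dist_ext => // j j_le; rewrite /upd ifN //.
    by apply/eqP => j_eq; move: j_le; rewrite j_eq; lia.
  apply: accept_prob_ext => // [|j j_gt]; first by rewrite /d; lia.
  by rewrite /upd ifN //; apply/eqP => j_eq; move: j_gt; rewrite j_eq /d; lia.
have al_dist v : (forall m, 0 <= al v m) /\ \sum_(m <- strings C) al v m = 1.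
  by apply: msg_dist_is_dist; lia.
have q_gt0 : 0 < q%:R :> R by rewrite ltr0n (leq_trans _ q_ge3).
have -> : level_sum k true (prob_out1 p C P) x t - level_sum k false (prob_out1 p C P) x t
    = \sum_u \sum_s \sum_(m <- strings C)
        (al (ffun_upd u s true) m - al (ffun_upd u s false) m) * be s m.
  rewrite /level_sum -sumrB; apply: eq_bigr => u _; rewrite -sumrB; apply: eq_bigr => s _.
  by rewrite !prob_split -sumrB; apply: eq_bigr => m _; rewrite mulrBl.
rewrite ltr_pdivlMr // mulrC.
have := index_advantage_lt (I := 'I_n) (C := C) (q := q) (al := al) (be := be).
rewrite card_ord; apply => //.
- by move=> v; have [] := al_dist v.
- by move=> v; have [] := al_dist v.
- by move=> s m; apply: accept_prob_in01; rewrite /d; lia.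
Qed.

Hypothesis success :
  forall x t b, chain_case p x t b -> 2%:R / 3%:R <= success_prob p C P x t b.

Definition hybrid_value x t (k : nat) : R :=
  hybrid_sum (fun j => (j <= k)%N) (iota 1 p.-1) (prob_out1 p C P) x t.

Lemma forced_chain_case k b (x : nat -> 'I_n -> bool) (t : nat -> 'I_n) :
  (forall i, (1 <= i <= p.-1)%N -> (i <= k)%N = b) ->
  forced (fun j => (j <= k)%N) (iota 1 p.-1) x t -> chain_case p x t b.
Proof. by move=> eq_b forced_xt i i_bounds; rewrite forced_xt ?eq_b // mem_iota; lia. Qed.

Lemma hybrid_value0_le x t : hybrid_value x t 0 <= 3^-1 * N ^+ p.-1.
Proof.
rewrite -[in N ^+ _](size_iota 1 p.-1) -(hybrid_sum_const (fun j => (j <= 0)%N) _ _ x t).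
apply: ler_hybrid_sum_forced => [|y u forced_yu]; first exact: iota_uniq.
have := success (forced_chain_case (b := false) _ forced_yu).
by rewrite /success_prob => /(_ ltac:(lia)); lra.
Qed.

Lemma hybrid_value_last_ge x t : 2%:R / 3%:R * N ^+ p.-1 <= hybrid_value x t p.-1.
Proof.
rewrite -[in N ^+ _](size_iota 1 p.-1) -(hybrid_sum_const (fun j => (j <= p.-1)%N) _ _ x t).
apply: ler_hybrid_sum_forced => [|y u forced_yu]; first exact: iota_uniq.
by have := success (forced_chain_case (b := true) _ forced_yu); apply; lia.
Qed.

Lemma hybrid_value_step q k x t : (0 < n)%N -> (3 <= q)%N -> (4 * q ^ 2 * C <= n)%N ->
  (k < p.-1)%N -> hybrid_value x t k.+1 - hybrid_value x t k < N / q%:R * N ^+ p.-2.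
Proof.
move=> n_gt0 q_ge3 n_ge k_lt; rewrite -[in N ^+ _](size_iota 1 p.-1).
apply: (hybrid_sum_step (k := k.+1)) => //.
- exact: prob_out1_ext.
- exact: iota_uniq.
- by rewrite mem_iota; apply/andP; split; lia.
- by rewrite /= ltnn.
- by move=> j /negbTE neq_jk; rewrite leq_eqVlt ltnS neq_jk.
- by move=> y u; apply: chain_level_gap; lia.
Qed.

End Protocol.

Theorem theorem11 (R : realType) (n p C : nat) (P : protocol R n) :
  (0 < n)%N -> (2 <= p)%N ->
  valid_protocol p C P ->
  (forall (x : nat -> 'I_n -> bool) (t : nat -> 'I_n) (b : bool),
      chain_case p x t b -> 2%:R / 3%:R <= success_prob p C P x t b) ->
  (n <= 36 * p ^ 2 * C)%N.
Proof.
move=> n_gt0 p_ge2 P_valid success; rewrite leqNgt; apply/negP => n_gt.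
set q := (3 * p.-1)%N.
have q_ge3 : (3 <= q)%N by rewrite /q; lia.
have n_ge : (4 * q ^ 2 * C <= n)%N by rewrite /q; nia.
pose T k := hybrid_value p C P (fun _ _ => false) (fun _ => Ordinal n_gt0) k.
set N : R := (2 ^ n * n)%:R.
have gap : T p.-1 - T 0 < \sum_(0 <= k < p.-1) N / q%:R * N ^+ p.-2.
  rewrite -telescope_sumr //.
  by apply: ltr_sum_nat => [|k /andP[_ k_lt]]; [lia | exact: hybrid_value_step].
have T0_le : T 0 <= 3^-1 * N ^+ p.-1 by apply: hybrid_value0_le.
have T_last_ge : 2%:R / 3%:R * N ^+ p.-1 <= T p.-1 by apply: hybrid_value_last_ge.
have gap_total : \sum_(0 <= k < p.-1) N / q%:R * N ^+ p.-2 = 3^-1 * N ^+ p.-1.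
  have p1_gt0 : 0 < (p.-1)%:R :> R by rewrite ltr0n; lia.
  have -> : N ^+ p.-1 = N * N ^+ p.-2 by rewrite -exprS; congr (_ ^+ _); lia.
  by rewrite sumr_const_nat subn0 -mulr_natr /q natrM; field; rewrite gt_eqF.
lra.
Qed.
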